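(* Let $\mathcal{Q}_{\mathrm{pri}}$ be the set of isomorphism classes of prime quandles. There is a surjective ring homomorphism $$\mathbb{Z}[\mathcal{Q}_{\mathrm{pri}}]\longrightarrow\mathrm{B}(\mathcal{Q})$$ from the polynomial ring over $\mathbb{Z}$ with variables indexed by $\mathcal{Q}_{\mathrm{pri}}$ onto the Burnside ring of finite quandles, sending the variable $[P]$ to $b(P)$.
   Context: A rack is a set $R$ with a binary operation $\rhd$ such that every left multiplication $\ell_a\colon b\mapsto a\rhd b$ is a bijection and $a\rhd(b\rhd c)=(a\rhd b)\rhd(a\rhd c)$ for all $a,b,c$; a quandle is a rack with $a\rhd a=a$ for all $a$. Products are cartesian products with componentwise operation. The inner automorphism group $\mathrm{Inn}(R)$ is the subgroup of the symmetric group on $R$ generated by all $\ell_a$; a rack is connected if it is non-empty and $\mathrm{Inn}(R)$ acts transitively on $R$. A prime quandle is a finite connected quandle that is not a singleton and that is isomorphic to a product $A\times B$ of two quandles only when one of $A,B$ is a singleton. A subrack of $R$ is a subset $S$ with $\ell_s(S)=S$ for all $s\in S$; a decomposition of $R$ into $S$ and $T$ means $S,T$ are disjoint subracks (possibly empty) with $S\cup T=R$. The Burnside ring of finite quandles $\mathrm{B}(\mathcal{Q})$ is the abelian group generated by symbols $b(Q)$, one for each finite quandle $Q$, subject to $b(Q_1)=b(Q_2)$ whenever $Q_1\cong Q_2$ and $b(Q)=b(S)+b(T)$ whenever $Q$ decomposes into $S$ and $T$; it is a commutative ring with $b(Q)b(Q')=b(Q\times Q')$ and unit the class of the singleton. 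*)

From HB Require Import structures.
From mathcomp Require Import all_boot all_fingroup all_algebra.
From mathcomp Require Import finmap.
From mathcomp.multinomials Require Import monalg.
From Stdlib Require Import ClassicalEpsilon.

Set Implicit Arguments.
Unset Strict Implicit.
Unset Printing Implicit Defensive.

Import GRing.Theory.
Local Open Scope ring_scope.

Definition asb (P : Prop) : bool :=
  if excluded_middle_informative P then true else false.

Lemma asbP (P : Prop) : reflect P (asb P).
Proof. by rewrite /asb; case: excluded_middle_informative => h; constructor. Qed.

(* A finite binary structure, coded on the carrier 'I_n. *)
Definition code := {n : nat & {ffun 'I_n * 'I_n -> 'I_n}}.
Definition csize (c : code) : nat := tag c.
Definition cop (c : code) (x y : 'I_(csize c)) : 'I_(csize c) := tagged c (x, y).
Arguments cop : clear implicits.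

Definition is_quandle (c : code) : Prop :=
  [/\ (forall a, bijective (cop c a)),
      (forall a b d, cop c a (cop c b d) = cop c (cop c a b) (cop c a d))
    & (forall a, cop c a a = a)].

(* finite quandles (every finite quandle is isomorphic to one of these) *)
Definition fq := {c : code | asb (is_quandle c)}.
Definition qsize (Q : fq) : nat := csize (val Q).
Definition qop (Q : fq) : 'I_(qsize Q) -> 'I_(qsize Q) -> 'I_(qsize Q) :=
  cop (val Q).
Arguments qop : clear implicits.

Lemma fq_quandle (Q : fq) : is_quandle (val Q).
Proof. exact/asbP/(valP Q). Qed.

Lemma qop_inj (Q : fq) a : injective (qop Q a).
Proof. by case: (fq_quandle Q) => /(_ a) /bij_inj. Qed.

Definition qiso (Q R : fq) : Prop :=
  exists f : 'I_(qsize Q) -> 'I_(qsize R),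
    bijective f /\ forall a b, f (qop Q a b) = qop R (f a) (f b).

Definition qiso_prod (P A B : fq) : Prop :=
  exists f : 'I_(qsize P) -> 'I_(qsize A) * 'I_(qsize B),
    bijective f /\ forall a b,
      f (qop P a b) = (qop A (f a).1 (f b).1, qop B (f a).2 (f b).2).

Definition subrack (Q : fq) (S : {set 'I_(qsize Q)}) : Prop :=
  forall s, s \in S -> qop Q s @: S = S.

Definition iso_sub (S Q : fq) (A : {set 'I_(qsize Q)}) : Prop :=
  exists f : 'I_(qsize S) -> 'I_(qsize Q),
    [/\ injective f, f @: [set: 'I_(qsize S)] = A
      & forall a b, f (qop S a b) = qop Q (f a) (f b)].

Definition decomp (Q S T : fq) : Prop :=
  exists A B : {set 'I_(qsize Q)},
    [/\ subrack A, subrack B, [disjoint A & B] & A :|: B = setT] /\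
    iso_sub S A /\ iso_sub T B.

Definition pt_code : code := existT _ 1%N [ffun _ => ord0].
Lemma ord1_eq (x y : 'I_1) : x = y.
Proof. by rewrite (ord1 x) (ord1 y). Qed.
Lemma pt_quandle : asb (is_quandle pt_code).
Proof.
apply/asbP; split.
- by move=> a; exists id => x; apply: ord1_eq.
- by move=> a b d; apply: ord1_eq.
- by move=> a; apply: ord1_eq.
Qed.
Definition qpt : fq := exist _ pt_code pt_quandle.

Lemma card_pair n m : #|{: 'I_n * 'I_m}| = (n * m)%N.
Proof. by rewrite card_prod !card_ord. Qed.
Definition pidx n m (p : 'I_n * 'I_m) : 'I_(n * m) :=
  cast_ord (card_pair n m) (enum_rank p).
Definition pinv n m (k : 'I_(n * m)) : 'I_n * 'I_m :=
  enum_val (cast_ord (esym (card_pair n m)) k).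
Definition prod_code (Q R : code) : code :=
  existT _ (csize Q * csize R)%N
    [ffun p : 'I_(csize Q * csize R) * 'I_(csize Q * csize R) =>
       let x := pinv p.1 in let y := pinv p.2 in
       pidx (cop Q x.1 y.1, cop R x.2 y.2)].
(* Q x R (the default branch is never taken: products of quandles are quandles) *)
Definition qprod (Q R : fq) : fq := insubd Q (prod_code (val Q) (val R)).

Definition lperm (Q : fq) (a : 'I_(qsize Q)) : {perm 'I_(qsize Q)} :=
  perm (@qop_inj Q a).
Definition Inn (Q : fq) : {set {perm 'I_(qsize Q)}} :=
  generated [set lperm a | a : 'I_(qsize Q)].
Definition connected (Q : fq) : Prop :=
  (0 < qsize Q)%N /\
  forall x y : 'I_(qsize Q), exists2 g, g \in Inn Q & g x = y.

Definition is_prime (P : fq) : Prop :=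
  [/\ connected P, qsize P <> 1%N &
      forall A B : fq, qiso_prod P A B -> qsize A = 1%N \/ qsize B = 1%N].

(* Q_pri: isomorphism classes of prime quandles, each represented by the
   member of the class with least code (pickle). *)
Definition Qpri := {P : fq | asb (is_prime P /\
                       forall P' : fq, qiso P P' -> (choice.pickle P <= choice.pickle P')%N)}.

Notation ZQpri := {malg int[{cmonom Qpri}]}.
Definition var (i : Qpri) : ZQpri := @mkmalgU _ int (ucm i) 1.

(* Burnside ring: free abelian group on finite quandles modulo relations *)
Notation FB := {malg int[fq]}.
Definition bsym (Q : fq) : FB := @mkmalgU _ int Q 1.

Definition bgen (x : FB) : Prop :=
  (exists Q R, qiso Q R /\ x = bsym Q - bsym R) \/
  (exists Q S T, decomp Q S T /\ x = bsym Q - bsym S - bsym T).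

Definition brel (x : FB) : Prop :=
  forall P : FB -> Prop, P 0 -> (forall y z, P y -> P z -> P (y - z)) ->
    (forall g, bgen g -> P g) -> P x.

(* equality in B(Q) of the classes of two formal combinations *)
Definition beq (x y : FB) : Prop := brel (x - y).

(* multiplication on formal combinations: b(Q) b(Q') = b(Q x Q') *)
Definition bmul (x y : FB) : FB :=
  \sum_(a <- msupp x) \sum_(b <- msupp y) @mkmalgU _ int (qprod a b) (x@_a * y@_b).

From HB Require Import structures.
From mathcomp Require Import all_boot all_fingroup all_algebra.
From mathcomp Require Import finmap.
From mathcomp.multinomials Require Import monalg.
From Stdlib Require Import Classical.

Set Implicit Arguments.
Unset Strict Implicit.
Unset Printing Implicit Defensive.

Import GRing.Theory.
Local Open Scope ring_scope.

(* Every finite connected quandle is isomorphic to a product of prime quandles: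
   a connected quandle that is neither a singleton nor prime splits as a product
   of two smaller quandles, which are connected as homomorphic images.  A
   non-empty quandle that is not connected decomposes into an Inn-orbit and its
   complement, two strictly smaller subquandles, and an empty quandle Q satisfies
   b(Q) = b(Q) + b(Q).  Induction on the size therefore puts every b(Q) in the
   subgroup spanned by the classes of products of primes.  Sending a monomial to
   the class of the corresponding product of primes is additive by construction
   and multiplicative because products of quandles are associative and
   commutative up to isomorphism. *)

(** * Products of quandles *)

Section BinaryStructures.
Implicit Types (T U V : Type).

Definition op_iso T U (opT : T -> T -> T) (opU : U -> U -> U) :=
  exists f : T -> U, bijective f /\ forall a b, f (opT a b) = opU (f a) (f b).

Definition prod_op T U (opT : T -> T -> T) (opU : U -> U -> U) (x y : T * U) :=
  (opT x.1 y.1, opU x.2 y.2).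

Definition quandle_law T (op : T -> T -> T) : Prop :=
  [/\ (forall a, bijective (op a)),
      (forall a b d, op a (op b d) = op (op a b) (op a d))
    & (forall a, op a a = a)].

Lemma op_iso_refl T (op : T -> T -> T) : op_iso op op.
Proof. by exists id; split=> //; exists id. Qed.

Lemma op_iso_sym T U (opT : T -> T -> T) (opU : U -> U -> U) :
  op_iso opT opU -> op_iso opU opT.
Proof.
case=> f [[g fK gK] hom_f]; exists g; split; first by exists f.
by move=> a b; apply: (can_inj fK); rewrite hom_f !gK.
Qed.

Lemma op_iso_trans T U V (opT : T -> T -> T) (opU : U -> U -> U) (opV : V -> V -> V) :
  op_iso opT opU -> op_iso opU opV -> op_iso opT opV.
Proof.
case=> f [bij_f hom_f] [g [bij_g hom_g]]; exists (g \o f).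
by split=> [|a b /=]; [exact: bij_comp | rewrite hom_f hom_g].
Qed.

Lemma op_iso_prod T T' U U' (opT : T -> T -> T) (opT' : T' -> T' -> T')
    (opU : U -> U -> U) (opU' : U' -> U' -> U') :
  op_iso opT opT' -> op_iso opU opU' -> op_iso (prod_op opT opU) (prod_op opT' opU').
Proof.
case=> f [[f' fK f'K] hom_f] [g [[g' gK g'K] hom_g]].
exists (fun x => (f x.1, g x.2)); split; last by move=> a b; rewrite /prod_op hom_f hom_g.
by exists (fun x => (f' x.1, g' x.2)) => -[a b] /=; rewrite ?fK ?gK ?f'K ?g'K.
Qed.

Lemma op_iso_prodA T U V (opT : T -> T -> T) (opU : U -> U -> U) (opV : V -> V -> V) :
  op_iso (prod_op (prod_op opT opU) opV) (prod_op opT (prod_op opU opV)).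
Proof.
exists (fun x => (x.1.1, (x.1.2, x.2))); split => //.
by exists (fun x => ((x.1, x.2.1), x.2.2)) => [[[a b] c]|[a [b c]]].
Qed.

Lemma op_iso_prodC T U (opT : T -> T -> T) (opU : U -> U -> U) :
  op_iso (prod_op opT opU) (prod_op opU opT).
Proof. by exists (fun x => (x.2, x.1)); split => //; exists (fun x => (x.2, x.1)) => -[]. Qed.

Lemma op_iso_prod_unit T U (opT : T -> T -> T) (opU : U -> U -> U) (u : U) :
  (forall v : U, v = u) -> op_iso (prod_op opT opU) opT.
Proof.
move=> U_single; exists fst; split => //.
by exists (fun a => (a, u)) => [[a v]|a] //=; rewrite [v]U_single.
Qed.

Lemma quandle_law_iso T U (opT : T -> T -> T) (opU : U -> U -> U) :
  op_iso opT opU -> quandle_law opU -> quandle_law opT.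
Proof.
case=> f [[g fK gK] hom_f] [bijU distU idemU]; split.
- move=> a; apply: (@eq_bij _ _ (g \o opU (f a) \o f)) => [|x /=]; last by rewrite -hom_f fK.
  by apply: bij_comp; [apply: bij_comp; [exists f | exact: bijU] | exists g].
- by move=> a b d; apply: (can_inj fK); rewrite !hom_f distU.
- by move=> a; apply: (can_inj fK); rewrite hom_f idemU.
Qed.

Lemma quandle_law_prod T U (opT : T -> T -> T) (opU : U -> U -> U) :
  quandle_law opT -> quandle_law opU -> quandle_law (prod_op opT opU).
Proof.
case=> bijT distT idemT [bijU distU idemU]; split.
- move=> [a1 a2]; case: (bijT a1) => g1 K1 K1'; case: (bijU a2) => g2 K2 K2'.
  by exists (fun x => (g1 x.1, g2 x.2)) => -[x1 x2]; rewrite /prod_op /= ?K1 ?K2 ?K1' ?K2'.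
- by move=> a b d; rewrite /prod_op /= distT distU.
- by move=> [a1 a2]; rewrite /prod_op /= idemT idemU.
Qed.

End BinaryStructures.

Lemma qquandle_law (Q : fq) : quandle_law (qop Q).
Proof. exact: fq_quandle. Qed.

Lemma pidxK n m : cancel (@pidx n m) (@pinv n m).
Proof. by move=> p; rewrite /pinv /pidx cast_ordK enum_rankK. Qed.

Lemma pinvK n m : cancel (@pinv n m) (@pidx n m).
Proof. by move=> k; rewrite /pinv /pidx enum_valK cast_ordKV. Qed.

Lemma prod_code_iso (c d : code) :
  op_iso (cop (prod_code c d)) (prod_op (cop c) (cop d)).
Proof.
exists (@pinv _ _); split; first by exists (@pidx _ _); [apply: pinvK | apply: pidxK].
by move=> a b; rewrite /cop /= ffunE /= pidxK.
Qed.

Lemma qprodP (Q R : fq) : op_iso (qop (qprod Q R)) (prod_op (qop Q) (qop R)).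
Proof.
have prod_quandle : asb (is_quandle (prod_code (val Q) (val R))).
  apply/asbP; apply: quandle_law_iso (prod_code_iso _ _) _.
  exact: quandle_law_prod (qquandle_law Q) (qquandle_law R).
have := insubdK Q prod_quandle; rewrite -/(qprod Q R).
by case: (qprod Q R) => c c_quandle /= def_c; subst c; apply: prod_code_iso.
Qed.

Lemma qiso_prodE (P A B : fq) :
  qiso_prod P A B = op_iso (qop P) (prod_op (qop A) (qop B)).
Proof. by []. Qed.

Lemma qiso_refl (Q : fq) : qiso Q Q.
Proof. exact: op_iso_refl. Qed.

Lemma qiso_sym (Q R : fq) : qiso Q R -> qiso R Q.
Proof. exact: op_iso_sym. Qed.

Lemma qiso_trans (Q R S : fq) : qiso Q R -> qiso R S -> qiso Q S.
Proof. exact: op_iso_trans. Qed.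

Lemma qiso_prod_qprod (P A B : fq) : qiso_prod P A B -> qiso P (qprod A B).
Proof. by rewrite qiso_prodE => isoP; apply: op_iso_trans isoP (op_iso_sym (qprodP A B)). Qed.

Lemma qprod_cong (A A' B B' : fq) :
  qiso A A' -> qiso B B' -> qiso (qprod A B) (qprod A' B').
Proof.
move=> isoA isoB; apply: op_iso_trans (qprodP A B) _.
exact: op_iso_trans (op_iso_prod isoA isoB) (op_iso_sym (qprodP A' B')).
Qed.

Lemma qprodA (A B C : fq) : qiso (qprod (qprod A B) C) (qprod A (qprod B C)).
Proof.
apply: op_iso_trans (qprodP _ _) _.
apply: op_iso_trans (op_iso_prod (qprodP _ _) (op_iso_refl _)) _.
apply: op_iso_trans (op_iso_prodA _ _ _) _.
apply: op_iso_trans (op_iso_prod (op_iso_refl _) (op_iso_sym (qprodP _ _))) _.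
exact: op_iso_sym (qprodP _ _).
Qed.

Lemma qprodC (A B : fq) : qiso (qprod A B) (qprod B A).
Proof.
apply: op_iso_trans (qprodP _ _) _.
exact: op_iso_trans (op_iso_prodC _ _) (op_iso_sym (qprodP _ _)).
Qed.

Lemma qprodCA (A B C : fq) : qiso (qprod A (qprod B C)) (qprod B (qprod A C)).
Proof.
apply: qiso_trans (qiso_sym (qprodA _ _ _)) _.
exact: qiso_trans (qprod_cong (qprodC _ _) (qiso_refl _)) (qprodA _ _ _).
Qed.

Lemma qprod_pt (A : fq) : qiso (qprod A qpt) A.
Proof.
apply: op_iso_trans (qprodP _ _) _.
by apply: (@op_iso_prod_unit _ _ _ _ ord0) => v; apply: ord1_eq.
Qed.

Definition qprod_seq (s : seq Qpri) : fq := foldr (fun i Q => qprod (val i) Q) qpt s.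

Lemma qprod_seq_cat s t : qiso (qprod_seq (s ++ t)) (qprod (qprod_seq s) (qprod_seq t)).
Proof.
elim: s => [|i s IHs] /=; first exact: qiso_trans (qiso_sym (qprod_pt _)) (qprodC _ _).
exact: qiso_trans (qprod_cong (qiso_refl _) IHs) (qiso_sym (qprodA _ _ _)).
Qed.

Lemma qprod_seq_rem i s : i \in s -> qiso (qprod_seq s) (qprod (val i) (qprod_seq (rem i s))).
Proof.
elim: s => [|j s IHs] //=; rewrite in_cons eq_sym; case: eqP => [-> _|_ /= i_s].
  exact: qiso_refl.
exact: qiso_trans (qprod_cong (qiso_refl _) (IHs i_s)) (qprodCA _ _ _).
Qed.

Lemma qprod_seq_perm s t : perm_eq s t -> qiso (qprod_seq s) (qprod_seq t).
Proof.
elim: s t => [|i s IHs] t; first by rewrite perm_sym => /perm_nilP ->; apply: qiso_refl.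
move=> perm_st; have i_t : i \in t by rewrite -(perm_mem perm_st) mem_head.
apply: qiso_trans (qiso_sym (qprod_seq_rem i_t)); apply: qprod_cong (qiso_refl _) (IHs _ _).
by rewrite -(perm_cons i) (perm_trans perm_st) ?perm_to_rem.
Qed.

Lemma qprod_seq_count s t :
  (forall i, count_mem i s = count_mem i t) -> qiso (qprod_seq s) (qprod_seq t).
Proof. by move=> count_st; apply/qprod_seq_perm/allP => i _ /=; rewrite count_st. Qed.

(** * Prime factorization of connected quandles *)

Canonical Inn_group (Q : fq) := [group of Inn Q].

Lemma lperm_Inn (Q : fq) a : lperm a \in Inn Q.
Proof. by rewrite mem_gen ?imset_f. Qed.

Lemma Inn_hom (P A : fq) (f : 'I_(qsize P) -> 'I_(qsize A)) :
    (forall a b, f (qop P a b) = qop A (f a) (f b)) ->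
  forall g, g \in Inn P -> exists2 g', g' \in Inn A & forall z, f (g z) = g' (f z).
Proof.
move=> hom_f g /gen_prodgP [n [c c_gen ->]].
elim: n c c_gen => [|n IHn] c c_gen.
  by exists 1%g => [|z]; rewrite ?group1 // big_ord0 !perm1.
have [g' g'_Inn hom_g'] := IHn (fun i => c (widen_ord (leqnSn n) i)) (fun i => c_gen _).
have /imsetP [b _ c_b] := c_gen ord_max.
exists (g' * lperm (f b))%g => [|z]; first by rewrite groupM ?lperm_Inn.
by rewrite big_ord_recr /= !permM c_b /lperm !permE hom_f hom_g'.
Qed.

Lemma connected_hom_surj (P A : fq) (f : 'I_(qsize P) -> 'I_(qsize A)) :
    (forall a b, f (qop P a b) = qop A (f a) (f b)) -> (forall a, exists x, f x = a) ->
  connected P -> connected A.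
Proof.
move=> hom_f surj_f [P_gt0 P_trans]; split.
  exact: leq_ltn_trans (leq0n _) (ltn_ord (f (Ordinal P_gt0))).
move=> a a'; have [x <-] := surj_f a; have [x' <-] := surj_f a'.
have [g g_Inn <-] := P_trans x x'.
by have [g' g'_Inn hom_g'] := Inn_hom hom_f g_Inn; exists g'; rewrite ?hom_g'.
Qed.

Lemma connected_iso (Q R : fq) : qiso Q R -> connected Q -> connected R.
Proof. by case=> f [[g fK gK] hom_f]; apply: (connected_hom_surj hom_f) => a; exists (g a). Qed.

Lemma connected_prod_factors (P A B : fq) :
  qiso_prod P A B -> connected P -> connected A /\ connected B.
Proof.
case=> f [[f' fK f'K] hom_f] P_conn; have x0 := f (Ordinal (proj1 P_conn)).
split; [apply: (connected_hom_surj (f := fun z => (f z).1)) P_conn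
       | apply: (connected_hom_surj (f := fun z => (f z).2)) P_conn].
- by move=> a b; rewrite hom_f.
- by move=> a; exists (f' (a, x0.2)); rewrite f'K.
- by move=> a b; rewrite hom_f.
- by move=> a; exists (f' (x0.1, a)); rewrite f'K.
Qed.

Lemma qiso_size (Q R : fq) : qiso Q R -> qsize Q = qsize R.
Proof. by case=> f [/bij_eq_card]; rewrite !card_ord. Qed.

Lemma qiso_prod_size (P A B : fq) : qiso_prod P A B -> qsize P = (qsize A * qsize B)%N.
Proof. by case=> f [/bij_eq_card]; rewrite card_prod !card_ord. Qed.

Lemma qiso_pt (Q : fq) : qsize Q = 1%N -> qiso Q qpt.
Proof.
move=> Q1; have single (x y : 'I_(qsize Q)) : x = y.
  have lt1 (z : 'I_(qsize Q)) : (z < 1)%N by rewrite -[X in (_ < X)%N]Q1.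
  by apply: ord_inj; move: (lt1 x) (lt1 y); rewrite !ltnS !leqn0 => /eqP-> /eqP->.
exists (fun=> ord0); split => [|a b]; last exact: ord1_eq.
by exists (fun=> cast_ord (esym Q1) ord0) => [x|y]; [apply: single | apply: ord1_eq].
Qed.

Lemma prime_iso (Q R : fq) : is_prime Q -> qiso Q R -> is_prime R.
Proof.
case=> Q_conn Q_neq1 Q_indec isoQR; split.
- exact: connected_iso isoQR Q_conn.
- by rewrite -(qiso_size isoQR).
- move=> A B; rewrite qiso_prodE => isoR; apply: Q_indec.
  by rewrite qiso_prodE; apply: op_iso_trans isoQR isoR.
Qed.

Lemma exists_Qpri_rep (Q : fq) : is_prime Q -> exists i : Qpri, qiso Q (val i).
Proof.
move=> Q_prime; pose has_rep n := asb (exists2 P, qiso Q P & choice.pickle P = n).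
have [|n /asbP [P isoQP <-] min_n] := ex_minnP (P := has_rep).
  by exists (choice.pickle Q); apply/asbP; exists Q => //; apply: qiso_refl.
suff P_min : asb (is_prime P /\ forall P', qiso P P' -> (choice.pickle P <= choice.pickle P')%N).
  by exists (exist _ P P_min).
apply/asbP; split => [|P' isoPP']; first exact: prime_iso isoQP.
by apply: min_n; apply/asbP; exists P' => //; apply: qiso_trans isoPP'.
Qed.

Lemma not_prime_split (Q : fq) : connected Q -> qsize Q <> 1%N -> ~ is_prime Q ->
  exists A B, [/\ qiso_prod Q A B, connected A, connected B,
                  (1 < qsize A)%N & (1 < qsize B)%N].
Proof.
move=> Q_conn Q_neq1 Q_nprime.
have [A [B [isoQAB A_neq1 B_neq1]]] :
    exists A B, [/\ qiso_prod Q A B, qsize A <> 1%N & qsize B <> 1%N].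
  apply: NNPP => no_split; apply: Q_nprime; split => // A B isoQAB.
  by apply: NNPP => /not_or_and [A_neq1 B_neq1]; apply: no_split; exists A, B.
have [A_conn B_conn] := connected_prod_factors isoQAB Q_conn.
have gt1 (C : fq) : connected C -> qsize C <> 1%N -> (1 < qsize C)%N.
  by case=> C_gt0 _ C_neq1; rewrite ltn_neqAle C_gt0 andbT eq_sym; apply/eqP.
by exists A, B; split; rewrite ?gt1.
Qed.

Lemma connected_factorization (Q : fq) : connected Q -> exists s, qiso Q (qprod_seq s).
Proof.
have [n] := ubnP (qsize Q); elim: n Q => // n IHn Q; rewrite ltnS => Q_le Q_conn.
have [Q1|Q_neq1] := eqVneq (qsize Q) 1%N; first by exists [::]; apply: qiso_pt.
have [Q_prime|Q_nprime] := classic (is_prime Q).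
  have [i isoQi] := exists_Qpri_rep Q_prime.
  by exists [:: i]; apply: qiso_trans isoQi (qiso_sym (qprod_pt _)).
have [A [B [isoQAB A_conn B_conn A_gt1 B_gt1]]] :=
  not_prime_split Q_conn (elimN eqP Q_neq1) Q_nprime.
have sizeQ := qiso_prod_size isoQAB.
have [sA isoA] : exists sA, qiso A (qprod_seq sA).
  by apply: IHn A_conn; rewrite (leq_trans _ Q_le) // sizeQ ltn_Pmulr // ltnW.
have [sB isoB] : exists sB, qiso B (qprod_seq sB).
  by apply: IHn B_conn; rewrite (leq_trans _ Q_le) // sizeQ ltn_Pmull // ltnW.
exists (sA ++ sB); apply: qiso_trans (qiso_prod_qprod isoQAB) _.
exact: qiso_trans (qprod_cong isoA isoB) (qiso_sym (qprod_seq_cat _ _)).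
Qed.

(** * Decomposition of non-connected quandles *)

Definition code_of (T : finType) (op : T -> T -> T) : code :=
  existT _ #|T| [ffun p => enum_rank (op (enum_val p.1) (enum_val p.2))].

Lemma code_of_iso (T : finType) (op : T -> T -> T) : op_iso (cop (code_of op)) op.
Proof.
exists enum_val; split; first by exists enum_rank; [apply: enum_valK | apply: enum_rankK].
by move=> a b; rewrite /cop /= ffunE enum_rankK.
Qed.

Definition fq_of (T : finType) (op : T -> T -> T) (op_quandle : quandle_law op) : fq :=
  exist _ (code_of op) (introT (asbP _) (quandle_law_iso (code_of_iso op) op_quandle)).

Section Subquandle.
Variables (Q : fq) (A : {set 'I_(qsize Q)}).
Hypothesis A_closed : {in A &, forall x y, qop Q x y \in A}.

Definition subq_op (x y : {x | x \in A}) : {x | x \in A} :=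
  insubd x (qop Q (val x) (val y)).

Lemma subq_opE x y : val (subq_op x y) = qop Q (val x) (val y).
Proof. by rewrite insubdK // A_closed ?(valP x) ?(valP y). Qed.

Lemma subq_op_quandle : quandle_law subq_op.
Proof.
case: (qquandle_law Q) => _ distQ idemQ; split.
- by move=> a; apply: injF_bij => x y /(congr1 val); rewrite !subq_opE => /qop_inj/val_inj.
- by move=> a b d; apply: val_inj; rewrite !subq_opE distQ.
- by move=> a; apply: val_inj; rewrite subq_opE idemQ.
Qed.

Definition subq : fq := fq_of subq_op_quandle.

Lemma subq_iso_sub : iso_sub subq A.
Proof.
exists (fun i => val (enum_val i : {x | x \in A})); split.
- by move=> i j /val_inj /enum_val_inj.
- apply/setP => z; apply/imsetP/idP => [[i _ ->]|z_A]; first exact: valP.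
  by exists (enum_rank (exist _ z z_A : {x | x \in A})); rewrite ?enum_rankK.
- by move=> a b; rewrite /qop /cop /= ffunE enum_rankK subq_opE.
Qed.

Lemma card_subq : qsize subq = #|A|.
Proof. by rewrite /qsize /= card_sig; apply: eq_card. Qed.

End Subquandle.

Lemma closed_subrack (Q : fq) (A : {set 'I_(qsize Q)}) :
  {in A &, forall x y, qop Q x y \in A} -> subrack A.
Proof.
move=> A_closed s s_A; apply/eqP; rewrite eqEcard card_imset ?leqnn ?andbT; last exact: qop_inj.
by apply/subsetP => _ /imsetP [z z_A ->]; apply: A_closed.
Qed.

Section InvariantDecomposition.
Variables (Q : fq) (A : {set 'I_(qsize Q)}).
Hypothesis A_inv : forall s z, (qop Q s z \in A) = (z \in A).

Lemma invariant_closed : {in A &, forall x y, qop Q x y \in A}.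
Proof. by move=> x y _; rewrite A_inv. Qed.

Lemma invariant_closedC : {in ~: A &, forall x y, qop Q x y \in ~: A}.
Proof. by move=> x y _; rewrite !inE A_inv. Qed.

Lemma decomp_invariant : decomp Q (subq invariant_closed) (subq invariant_closedC).
Proof.
exists A, (~: A); split; last by split; apply: subq_iso_sub.
split; [exact: closed_subrack invariant_closed | exact: closed_subrack invariant_closedC | |].
  by rewrite disjoints_subset setCK.
exact: setUCr.
Qed.

End InvariantDecomposition.

Lemma card_lt_notin (T : finType) (A : {set T}) z : z \notin A -> (#|A| < #|T|)%N.
Proof.
move=> z_notA; rewrite -cardsT proper_card // properT.
by apply: contraNneq z_notA => ->; apply: in_setT.
Qed.

Lemma orbit_Inn_invariant (Q : fq) x s z :
  (qop Q s z \in orbit 'P (Inn Q) x) = (z \in orbit 'P (Inn Q) x).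
Proof.
have -> : qop Q s z = aperm z (lperm s) by rewrite apermE permE.
exact/orbit_actr/lperm_Inn.
Qed.

Lemma decomp_not_connected (Q : fq) : (0 < qsize Q)%N -> ~ connected Q ->
  exists S T, [/\ decomp Q S T, (qsize S < qsize Q)%N & (qsize T < qsize Q)%N].
Proof.
move=> Q_gt0 Q_nconn.
have [x [y y_out]] : exists x y, y \notin orbit 'P (Inn Q) x.
  apply: NNPP => orbits_full; apply: Q_nconn; split => // x y.
  case: (boolP (y \in orbit 'P (Inn Q) x)) => [/orbitP [g g_Inn <-]|y_out]; first by exists g.
  by case: orbits_full; exists x, y.
have x_in : x \notin ~: orbit 'P (Inn Q) x by rewrite inE negbK orbit_refl.
exists (subq (invariant_closed (orbit_Inn_invariant x))),
       (subq (invariant_closedC (orbit_Inn_invariant x))).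
split; first exact: decomp_invariant.
  by have := card_lt_notin y_out; rewrite card_ord card_subq.
by have := card_lt_notin x_in; rewrite card_ord card_subq.
Qed.

Lemma decomp_size0 (Q : fq) : qsize Q = 0%N -> decomp Q Q Q.
Proof.
move=> Q0; have no_elt (z : 'I_(qsize Q)) : False by case: z => m; rewrite Q0.
exists set0, set0; split; last by split; exists id; split=> //; apply/setP => z; case: (no_elt z).
split=> [s|s||]; rewrite ?inE ?disjoints_subset ?sub0set //.
by apply/setP => z; case: (no_elt z).
Qed.

(** * Relations of the Burnside ring *)

Lemma brel0 : brel 0.
Proof. by move=> P P0. Qed.

Lemma brelB x y : brel x -> brel y -> brel (x - y).
Proof. by move=> rel_x rel_y P P0 PB Pgen; apply: PB (rel_x P P0 PB Pgen) (rel_y P P0 PB Pgen). Qed.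

Lemma brelN x : brel x -> brel (- x).
Proof. by rewrite -sub0r; apply: brelB brel0. Qed.

Lemma brelD x y : brel x -> brel y -> brel (x + y).
Proof. by move=> rel_x /brelN; rewrite -{2}[y]opprK; apply: brelB. Qed.

Lemma brelMz x (c : int) : brel x -> brel (x *~ c).
Proof.
have brelMn n : brel x -> brel (x *+ n).
  move=> rel_x; elim: n => [|n IHn]; first by rewrite mulr0n; apply: brel0.
  by rewrite mulrS; apply: brelD.
by case: c => n rel_x; rewrite ?NegzE ?mulrNz; [|apply: brelN]; apply: brelMn.
Qed.

Lemma beq_refl x : beq x x.
Proof. by rewrite /beq subrr; apply: brel0. Qed.

Lemma beq_sym x y : beq x y -> beq y x.
Proof. by move=> rel_xy; rewrite /beq -opprB; apply: brelN. Qed.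

Lemma beq_trans x y z : beq x y -> beq y z -> beq x z.
Proof. by move=> rel_xy rel_yz; rewrite /beq -[x - z](subrKA y); apply: brelD. Qed.

Lemma beqD x x' y y' : beq x x' -> beq y y' -> beq (x + y) (x' + y').
Proof. by move=> rel_x rel_y; rewrite /beq opprD addrACA; apply: brelD. Qed.

Lemma beqMz x y (c : int) : beq x y -> beq (x *~ c) (y *~ c).
Proof. by move=> rel_xy; rewrite /beq -mulrzBl; apply: brelMz. Qed.

Lemma beq_sum (I : Type) (r : seq I) (P : pred I) (F G : I -> FB) :
  (forall i, P i -> beq (F i) (G i)) ->
  beq (\sum_(i <- r | P i) F i) (\sum_(i <- r | P i) G i).
Proof. by move=> beqFG; apply: big_ind2 => //; [apply: beq_refl | apply: beqD]. Qed.

Lemma beq_iso (Q R : fq) : qiso Q R -> beq (bsym Q) (bsym R).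
Proof. by move=> isoQR P P0 PB; apply; left; exists Q, R. Qed.

Lemma beq_decomp (Q S T : fq) : decomp Q S T -> beq (bsym Q) (bsym S + bsym T).
Proof. by move=> decQ; rewrite /beq opprD addrA => P P0 PB; apply; right; exists Q, S, T. Qed.

Lemma bsymZ c (Q : fq) : << c *g Q >> = bsym Q *~ c.
Proof. by rewrite /bsym -(raddfMz (@mkmalgU fq int Q)) intz. Qed.

(** * The ring homomorphism *)

Definition cmonom_seq (m : {cmonom Qpri}) : seq Qpri :=
  flatten [seq nseq (m i) i | i <- finsupp m].

Lemma count_cmonom_seq m i : count_mem i (cmonom_seq m) = m i.
Proof.
rewrite /cmonom_seq count_flatten -map_comp sumnE big_map /=.
under eq_bigr => j _ do rewrite count_nseq /=.
have [i_m|i_m] := boolP (i \in finsupp m).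
  rewrite (big_fsetD1 i) //= eqxx mul1n big1_fset ?addn0 // => j.
  by rewrite in_fsetD1 => /andP [/negbTE -> _].
rewrite big1_fset => [|j j_m _]; first by apply/esym/eqP; rewrite cmE_eq0.
by case: eqP => // ij; rewrite -ij j_m in i_m.
Qed.

Definition seq_cmonom (s : seq Qpri) : {cmonom Qpri} := \big[mmul/mone]_(i <- s) ucm i.

Lemma seq_cmonomE s i : seq_cmonom s i = count_mem i s.
Proof.
by elim: s => [|j s IHs]; rewrite /seq_cmonom ?big_nil ?big_cons ?cm1 // cmM cmU IHs.
Qed.

Definition monom_quandle (m : {cmonom Qpri}) : fq := qprod_seq (cmonom_seq m).

Lemma monom_quandle_seq s : qiso (monom_quandle (seq_cmonom s)) (qprod_seq s).
Proof. by apply: qprod_seq_count => i; rewrite count_cmonom_seq seq_cmonomE. Qed.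

Lemma monom_quandleM m1 m2 :
  qiso (monom_quandle (mmul m1 m2)) (qprod (monom_quandle m1) (monom_quandle m2)).
Proof.
apply: qiso_trans (qprod_seq_cat _ _); apply: qprod_seq_count => i.
by rewrite count_cat !count_cmonom_seq cmM.
Qed.

Definition burnside_map (p : ZQpri) : FB := \sum_(m <- msupp p) << p@_m *g monom_quandle m >>.

Lemma burnside_mapEw (d : {fset {cmonom Qpri}}) p : (msupp p `<=` d)%fset ->
  burnside_map p = \sum_(m <- d) << p@_m *g monom_quandle m >>.
Proof.
move=> supp_p; rewrite /burnside_map (big_fset_incl _ supp_p) // => m _ m_notin.
by rewrite mcoeff_outdom // monalgU0.
Qed.

Lemma burnside_map_is_zmod_morphism : GRing.zmod_morphism burnside_map.
Proof.
move=> p q; pose d := (msupp p `|` msupp q)%fset.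
rewrite !(@burnside_mapEw d) ?msuppB_le ?fsubsetUl ?fsubsetUr // -sumrB.
by apply: eq_bigr => m _; rewrite mcoeffB monalgUB.
Qed.

HB.instance Definition _ :=
  GRing.isZmodMorphism.Build ZQpri FB burnside_map burnside_map_is_zmod_morphism.

Lemma burnside_mapU c m : burnside_map << c *g m >> = << c *g monom_quandle m >>.
Proof. by rewrite (@burnside_mapEw [fset m]%fset) ?msuppU_le // big_seq_fset1 mcoeffUU. Qed.

Lemma bmulEw (dx dy : {fset fq}) x y : (msupp x `<=` dx)%fset -> (msupp y `<=` dy)%fset ->
  bmul x y = \sum_(a <- dx) \sum_(b <- dy) << x@_a * y@_b *g qprod a b >>.
Proof.
move=> supp_x supp_y; rewrite /bmul (big_fset_incl _ supp_x) => [|a _ a_notin].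
  apply: eq_bigr => a _; rewrite (big_fset_incl _ supp_y) // => b _ b_notin.
  by rewrite (mcoeff_outdom b_notin) mulr0 monalgU0.
by rewrite big1 // => b _; rewrite mcoeff_outdom // mul0r monalgU0.
Qed.

Lemma bmulDl x x' y : bmul (x + x') y = bmul x y + bmul x' y.
Proof.
pose d := (msupp x `|` msupp x')%fset.
rewrite !(@bmulEw d (msupp y)) ?msuppD_le ?fsubsetUl ?fsubsetUr // -big_split.
apply: eq_bigr => a _; rewrite -big_split.
by apply: eq_bigr => b _; rewrite mcoeffD mulrDl monalgUD.
Qed.

Lemma bmulDr x y y' : bmul x (y + y') = bmul x y + bmul x y'.
Proof.
pose d := (msupp y `|` msupp y')%fset.
rewrite !(@bmulEw (msupp x) d) ?msuppD_le ?fsubsetUl ?fsubsetUr // -big_split.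
apply: eq_bigr => a _; rewrite -big_split.
by apply: eq_bigr => b _; rewrite mcoeffD mulrDr monalgUD.
Qed.

Lemma bmul0l y : bmul 0 y = 0.
Proof. by rewrite /bmul msupp0 big_seq_fset0. Qed.

Lemma bmul0r x : bmul x 0 = 0.
Proof. by rewrite /bmul big1 // => a _; rewrite msupp0 big_seq_fset0. Qed.

Lemma bmulUU c d a b : bmul << c *g a >> << d *g b >> = << c * d *g qprod a b >>.
Proof. by rewrite (@bmulEw [fset a]%fset [fset b]%fset) ?msuppU_le // !big_seq_fset1 !mcoeffUU. Qed.

Lemma bmul_suml (I : Type) (r : seq I) (F : I -> FB) y :
  bmul (\sum_(i <- r) F i) y = \sum_(i <- r) bmul (F i) y.
Proof. exact: (big_morph (bmul^~ y) (fun x x' => bmulDl x x' y) (bmul0l y)). Qed.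

Lemma bmul_sumr (I : Type) (r : seq I) (F : I -> FB) x :
  bmul x (\sum_(i <- r) F i) = \sum_(i <- r) bmul x (F i).
Proof. exact: (big_morph (bmul x) (bmulDr x) (bmul0r x)). Qed.

Lemma burnside_mapM p q : beq (burnside_map (p * q)) (bmul (burnside_map p) (burnside_map q)).
Proof.
rewrite malgME raddf_sum /= {2 3}/burnside_map bmul_suml; apply: beq_sum => m1 _.
rewrite raddf_sum bmul_sumr; apply: beq_sum => m2 _ /=.
by rewrite burnside_mapU bmulUU !bsymZ; apply: beqMz; apply: beq_iso; apply: monom_quandleM.
Qed.

Lemma burnside_map_bsym (Q : fq) : exists p, beq (burnside_map p) (bsym Q).
Proof.
have [n] := ubnP (qsize Q); elim: n Q => // n IHn Q; rewrite ltnS => Q_le.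
have [Q0|Q_gt0] := posnP (qsize Q).
  have beqQ := beq_decomp (decomp_size0 Q0).
  exists 0; rewrite raddf0 -(subrr (bsym Q)) -[X in beq _ X](addrK (bsym Q)).
  exact: beqD beqQ (beq_refl _).
have [Q_conn|Q_nconn] := classic (connected Q).
  have [s isoQs] := connected_factorization Q_conn.
  exists << seq_cmonom s >>; rewrite burnside_mapU.
  exact: beq_iso (qiso_trans (monom_quandle_seq s) (qiso_sym isoQs)).
have [S [T [decQ S_lt T_lt]]] := decomp_not_connected Q_gt0 Q_nconn.
have [pS beqS] := IHn S (leq_trans S_lt Q_le).
have [pT beqT] := IHn T (leq_trans T_lt Q_le).
exists (pS + pT); rewrite raddfD.
exact: beq_trans (beqD beqS beqT) (beq_sym (beq_decomp decQ)).
Qed.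

Lemma burnside_map_onto x : exists p, beq (burnside_map p) x.
Proof.
rewrite (monalgE x); apply: (big_ind (fun y => exists p, beq (burnside_map p) y)).
- by exists 0; rewrite raddf0; apply: beq_refl.
- by move=> y z [p beq_p] [q beq_q]; exists (p + q); rewrite raddfD; apply: beqD.
- move=> Q _; have [p beq_p] := burnside_map_bsym Q.
  by exists (p *~ x@_Q); rewrite raddfMz bsymZ; apply: beqMz.
Qed.

Lemma burnside_map1 : beq (burnside_map 1) (bsym qpt).
Proof.
have -> : (1 : ZQpri) = << seq_cmonom [::] >> by rewrite /seq_cmonom big_nil.
by rewrite burnside_mapU; apply: beq_iso (monom_quandle_seq [::]).
Qed.

Lemma burnside_map_var i : beq (burnside_map (var i)) (bsym (val i)).
Proof.
rewrite /var burnside_mapU; apply: beq_iso.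
have -> : ucm i = seq_cmonom [:: i] by rewrite /seq_cmonom big_seq1.
exact: qiso_trans (monom_quandle_seq [:: i]) (qprod_pt _).
Qed.

Theorem theorem7p9 :
  exists phi : ZQpri -> FB,
    [/\ (forall p q, beq (phi (p + q)) (phi p + phi q)),
        (forall p q, beq (phi (p * q)) (bmul (phi p) (phi q))),
        beq (phi 1) (bsym qpt),
        (forall i : Qpri, beq (phi (var i)) (bsym (val i)))
      & (forall x : FB, exists p : ZQpri, beq (phi p) x)].
Proof.
exists burnside_map; split.
- by move=> p q; rewrite raddfD; apply: beq_refl.
- exact: burnside_mapM.
- exact: burnside_map1.
- exact: burnside_map_var.
- exact: burnside_map_onto.
Qed.
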